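(* Let $F$, $H$, $K$ and $R$ be fixed monic polynomials in $\mathbb{F}_q[T]$ with $F\mid R$, and let $z$ be a non-negative integer with $z<\deg(R)$. Then \[ \sum_{\substack{A,B\in\mathbb{A}^+\\ \deg(AB)=z\\ AH\equiv BK\ (\mathrm{mod}\ F)\\ AH\neq BK\\ (ABHK,R)=1}}\frac{1}{|AB|^{\frac{1}{2}}}\ll\frac{q^{\frac{z}{2}}(z+1)|HK|}{|F|}. \]
   Context: $q$ is a power of an odd prime, $\mathbb{A}=\mathbb{F}_q[T]$, $\mathbb{A}^+$ is the set of monic polynomials in $\mathbb{A}$, and $|f|=q^{\deg(f)}$ for $f\in\mathbb{A}$. *)

From HB Require Import structures.
From mathcomp Require Import all_boot all_order all_algebra all_field.
Set Implicit Arguments. Unset Strict Implicit. Unset Printing Implicit Defensive.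
Import Order.TTheory GRing.Theory Num.Theory.
Local Open Scope ring_scope.

Definition pabs (R : rcfType) (Fq : finFieldType) (f : {poly Fq}) : R :=
  (#|Fq|%:R) ^+ (size f).-1.

(* The sum in Lemma 3.4.  Monic A, B with deg(AB) = z have size <= z+1,
   so we range over {poly_(z.+1) Fq} (a finite type). *)
Definition lhs34 (R : rcfType) (Fq : finFieldType)
    (F H K Rm : {poly Fq}) (z : nat) : R :=
  \sum_(A : {poly_(z.+1) Fq})
    \sum_(B : {poly_(z.+1) Fq} |
       [&& val A \is monic, val B \is monic,
           (size (val A * val B)).-1 == z,
           F %| (val A * H - val B * K),
           val A * H != val B * K &
           coprimep (val A * val B * H * K) Rm])
      1 / Num.sqrt (pabs R (val A * val B)).

From HB Require Import structures.
From mathcomp Require Import all_boot all_order all_algebra all_field.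
From mathcomp Require Import zify ring.
Set Implicit Arguments. Unset Strict Implicit. Unset Printing Implicit Defensive.
Import Order.TTheory GRing.Theory Num.Theory.
Local Open Scope ring_scope.

(* Every summand equals q^(-z/2), so the bound is a count of pairs.  Since
   A H - B K is a nonzero multiple of F, deg F <= deg (A H) or deg F <= deg (B K);
   by symmetry take the first.  H is invertible modulo F (it is coprime to Rm),
   so B determines A mod F, and the pair (A, B) is recovered from deg B and
   (B - T^deg B) + T^deg B * (A div F), a polynomial of degree at most
   z + deg H - deg F.  Hence there are at most (z + 1) q^(z + deg H + 1) / |F|
   such pairs. *)

Lemma size_monic_gt0 (R : nzSemiRingType) (p : {poly R}) :
  p \is monic -> (0 < size p)%N.
Proof. by move=> /monic_neq0; rewrite size_poly_gt0. Qed.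

Lemma drop_poly_monic (R : nzSemiRingType) (p : {poly R}) :
  p \is monic -> drop_poly (size p).-1 p = 1.
Proof.
move=> mp; apply/polyP => i; rewrite coef_drop_poly coefC.
have p_gt0 := size_monic_gt0 mp.
case: i => [|i]; first by rewrite add0n -lead_coefE (monicP mp).
by rewrite nth_default //=; lia.
Qed.

Lemma monic_take_poly_inj (R : nzSemiRingType) (p q : {poly R}) :
  p \is monic -> q \is monic -> size p = size q ->
  take_poly (size p).-1 p = take_poly (size p).-1 q -> p = q.
Proof.
move=> mp mq spq eq_take; apply: eqp_take_drop eq_take _.
by rewrite drop_poly_monic // spq drop_poly_monic.
Qed.

Lemma eq_modp_Gauss (R : fieldType) (F H G A1 A2 B : {poly R}) :
  coprimep H F -> F %| A1 * H - B * G -> F %| A2 * H - B * G ->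
  A1 %% F = A2 %% F.
Proof.
move=> coHF dv1 dv2.
have : F %| (A1 - A2) * H.
  have -> : (A1 - A2) * H = (A1 * H - B * G) - (A2 * H - B * G) by ring.
  exact: dvdp_sub.
rewrite Gauss_dvdpl 1?coprimep_sym // => /modp_eq0.
by rewrite modpD modpN => /eqP; rewrite subr_eq0 => /eqP.
Qed.

Section CongruentPairs.
Variables (K : finFieldType) (z : nat) (F H G : {poly K}).

Definition congr_pairs : {set {poly_(z.+1) K} * {poly_(z.+1) K}} :=
  [set p | [&& val p.1 \is monic, val p.2 \is monic,
     (size (val p.1 * val p.2)).-1 == z, F %| val p.1 * H - val p.2 * G &
     (size F <= size (val p.1 * H)%R)%N]].

Definition pair_code (A B : {poly K}) : {poly K} :=
  take_poly (size B).-1 B + (A %/ F) * 'X^((size B).-1).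

Hypotheses (mF : F \is monic) (mH : H \is monic).

Lemma size_pair_code (A B : {poly K}) : A \is monic -> B \is monic ->
  (size (A * B)).-1 = z -> (size F <= size (A * H)%R)%N ->
  (size (pair_code A B) <= (z + size H) - (size F).-1)%N.
Proof.
move=> mA mB szAB szF.
rewrite size_monicM ?monic_neq0 // in szF.
rewrite size_monicM ?monic_neq0 // in szAB.
have szQ := size_polyMleq (A %/ F) 'X^((size B).-1).
rewrite size_polyXn size_divp ?monic_neq0 // in szQ.
have szT := size_take_poly (size B).-1 B.
apply: leq_trans (size_polyD _ _) _; rewrite geq_max.
apply/andP; split; [apply: leq_trans szT _ | apply: leq_trans szQ _].
all: move: szAB szF (size_monic_gt0 mA) (size_monic_gt0 mB).
all: move: (size_monic_gt0 mF) (size_monic_gt0 mH).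
(* The sizes occur at different (convertible) ring instances; [set] merges them
   into single atoms for lia. *)
all: set sA := size A; set sB := size B; set sF := size F; set sH := size H.
all: lia.
Qed.

Hypothesis coHF : coprimep H F.

Lemma pair_code_inj (A1 B1 A2 B2 : {poly K}) :
  B1 \is monic -> B2 \is monic -> size B1 = size B2 ->
  F %| A1 * H - B1 * G -> F %| A2 * H - B2 * G ->
  pair_code A1 B1 = pair_code A2 B2 -> A1 = A2 /\ B1 = B2.
Proof.
move=> mB1 mB2 szB dv1 dv2; rewrite /pair_code -szB.
set b := (size B1).-1 => eq_code.
have szT1 := size_take_poly b B1; have szT2 := size_take_poly b B2.
have eqB : B1 = B2.
  apply: monic_take_poly_inj => //.
  by move/(congr1 (take_poly b)): eq_code; rewrite !take_polyDMXn.
have eq_div : A1 %/ F = A2 %/ F.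
  by move/(congr1 (drop_poly b)): eq_code; rewrite !drop_polyDMXn.
rewrite eqB in dv1; split=> //.
by rewrite (divp_eq A1 F) (divp_eq A2 F) eq_div (eq_modp_Gauss coHF dv1 dv2).
Qed.

Lemma card_congr_pairs :
  (#|congr_pairs| * #|K| ^ (size F).-1 <= z.+1 * #|K| ^ (z + size H))%N.
Proof.
set n := (z + size H - (size F).-1)%N.
have card_le : (#|congr_pairs| <= z.+1 * #|K| ^ n)%N.
  pose code (p : {poly_(z.+1) K} * {poly_(z.+1) K}) : 'I_z.+1 * {poly_n K} :=
    (inord (size (val p.2)).-1, npolyp n (pair_code (val p.1) (val p.2))).
  have code_inj : {in congr_pairs &, injective code}.
    move=> [A1 B1] [A2 B2]; rewrite !inE /=.
    move=> /and5P [mA1 mB1 /eqP szAB1 dv1 szF1] /and5P [mA2 mB2 /eqP szAB2 dv2 szF2].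
    case=> eq_deg eq_code.
    have szB : size (val B1) = size (val B2).
      move/(congr1 (@nat_of_ord _)): eq_deg; rewrite !inordK; last 2 first.
      - by move: (size_npoly B2); case: size.
      - by move: (size_npoly B1); case: size.
      move=> eq_pred; rewrite -(prednK (size_monic_gt0 mB1)) eq_pred.
      by rewrite prednK ?size_monic_gt0.
    move/(congr1 (@polyn _ n)): eq_code; rewrite !npolypK ?size_pair_code //.
    by move=> /(pair_code_inj mB1 mB2 szB dv1 dv2) [/val_inj -> /val_inj ->].
  rewrite -(card_in_imset code_inj); apply: leq_trans (max_card _) _.
  by rewrite card_prod card_ord card_npoly.
have q_gt0 := ltnW (card_finNzRing_gt1 K).
case: (set_0Vmem congr_pairs) => [-> | [[A B]]]; first by rewrite cards0.
rewrite inE => /and5P [mA mB /eqP szAB _ szF].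
have degF : ((size F).-1 <= z + size H)%N.
  rewrite size_monicM ?monic_neq0 // in szF.
  move: (size_npoly A) szF; set sA := size A; set sF := size F; lia.
rewrite -(subnK degF) -/n expnD mulnA leq_pmul2r ?expn_gt0 ?q_gt0 //.
Qed.

End CongruentPairs.

Section Lhs34.
Variables (Fq : finFieldType) (F H K Rm : {poly Fq}) (z : nat).

Definition pairs34 : {set {poly_(z.+1) Fq} * {poly_(z.+1) Fq}} :=
  [set p | [&& val p.1 \is monic, val p.2 \is monic,
     (size (val p.1 * val p.2)).-1 == z,
     F %| (val p.1 * H - val p.2 * K),
     val p.1 * H != val p.2 * K &
     coprimep (val p.1 * val p.2 * H * K) Rm]].

Lemma lhs34E (R : rcfType) :
  lhs34 R F H K Rm z = #|pairs34|%:R / Num.sqrt (#|Fq|%:R ^+ z).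
Proof.
rewrite /lhs34 pair_big_dep /= (eq_bigr (fun _ => 1 / Num.sqrt (#|Fq|%:R ^+ z))).
  rewrite sumr_const mulr_natl mul1r; congr (_ *+ _).
  by apply: eq_card => p; rewrite inE.
by move=> [A B] /and5P [_ _ /eqP szAB _ _]; rewrite /pabs szAB.
Qed.

Lemma pairs34_sub :
  pairs34 \subset congr_pairs z F H K :|: [set swap_pair p | p in congr_pairs z F K H].
Proof.
apply/subsetP => -[A B]; rewrite inE /= => /and5P [mA mB szAB dvF /andP [neq _]].
have := dvdp_leq _ dvF; rewrite subr_eq0 neq => /(_ isT) /leq_trans.
move=> /(_ _ (size_polyD _ _)); rewrite size_polyN leq_max => /orP [szH | szK].
  by rewrite inE; apply/orP; left; rewrite inE /=; apply/and5P.
rewrite inE; apply/orP; right; apply/imsetP; exists (B, A) => //.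
rewrite inE /= mulrC szAB -dvdpNr opprB; exact/and5P.
Qed.

Hypotheses (mF : F \is monic) (mH : H \is monic) (mK : K \is monic).
Hypothesis dFR : F %| Rm.

Lemma card_pairs34 :
  (#|pairs34| * #|Fq| ^ (size F).-1 <=
     2 * (z.+1 * #|Fq| ^ (z.+1 + (size (H * K)%R).-1)))%N.
Proof.
case: (set_0Vmem pairs34) => [-> | [[A B]]]; first by rewrite cards0.
rewrite inE => /and5P [_ _ _ _ /andP [_ coABHK_Rm]].
have /andP [coHF coKF] : coprimep H F && coprimep K F.
  move: (coprimep_dvdl dFR coABHK_Rm).
  by rewrite !coprimepMl => /andP [/andP [_ ->] ->].
have HK_neq0 : H * K != 0 := mulf_neq0 (monic_neq0 mH) (monic_neq0 mK).
have q_gt0 := ltnW (card_finNzRing_gt1 Fq).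
have card_le (G1 G2 : {poly Fq}) : G1 \is monic -> coprimep G1 F ->
    (size G1 <= size (H * K)%R)%N ->
    (#|congr_pairs z F G1 G2| * #|Fq| ^ (size F).-1 <=
       z.+1 * #|Fq| ^ (z.+1 + (size (H * K)%R).-1))%N.
  move=> mG1 coG1F szG1; apply: leq_trans (card_congr_pairs _ _ mF mG1 coG1F) _.
  by rewrite leq_mul2l leq_pexp2l ?orbT //; lia.
have := card_le _ K mH coHF (dvdp_leq HK_neq0 (dvdp_mulIl H K)).
have := card_le _ H mK coKF (dvdp_leq HK_neq0 (dvdp_mulIr H K)).
have := leq_trans (subset_leq_card pairs34_sub) (leq_card_setU _ _).1.
rewrite card_imset; last exact: can_inj swap_pairK.
move=> le_sum le_K le_H; rewrite mul2n -addnn.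
by apply: leq_trans (leq_add le_H le_K); rewrite -mulnDl leq_mul2r le_sum orbT.
Qed.

End Lhs34.

Theorem lemma3p4 (R : rcfType) (Fq : finFieldType) :
  odd #|Fq| ->
  exists C : R, 0 < C /\
    forall (F H K Rm : {poly Fq}) (z : nat),
      F \is monic -> H \is monic -> K \is monic -> Rm \is monic ->
      F %| Rm -> (z < (size Rm).-1)%N ->
      lhs34 R F H K Rm z <=
        C * (Num.sqrt ((#|Fq|%:R : R) ^+ z) * (z.+1)%:R * pabs R (H * K)
             / pabs R F).
Proof.
move=> _.
have q_gt0 := ltnW (card_finNzRing_gt1 Fq).
exists (2 * #|Fq|)%:R; split; first by rewrite ltr0n muln_gt0 q_gt0.
move=> F H K Rm z mF mH mK _ dFR _.
rewrite lhs34E /pabs; set s := Num.sqrt _.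
have s_gt0 : 0 < s by rewrite sqrtr_gt0 exprn_gt0 // ltr0n.
have s2 : s ^+ 2 = #|Fq|%:R ^+ z by rewrite sqr_sqrtr // exprn_ge0 // ler0n.
rewrite ler_pdivrMr //.
have -> : (2 * #|Fq|)%:R * (s * z.+1%:R * #|Fq|%:R ^+ (size (H * K)).-1 /
    #|Fq|%:R ^+ (size F).-1) * s =
    (2 * (z.+1 * #|Fq| ^ (z.+1 + (size (H * K)%R).-1)))%:R /
    (#|Fq| ^ (size F).-1)%:R :> R.
  rewrite !natrM !natrX exprD exprS -s2 expr2; field.
  by rewrite expf_neq0 // pnatr_eq0 -lt0n.
rewrite ler_pdivlMr ?ltr0n ?expn_gt0 ?q_gt0 // -natrM ler_nat.
exact: card_pairs34.
Qed.
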